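(* If $\sigma'$ is not lower bounded, the optimal policy cannot be identified from the transitions and the comparison probabilities; in particular, for the link function $\sigma(x)=\tfrac12(1+\mathrm{sign}(x))$ there exist an episodic MDP (with horizon $H=2$, known transitions) and two reward functions $r^{(1)},r^{(2)}$ such that $\sigma(r^{(1)}(\tau)-r^{(1)}(\tau'))=\sigma(r^{(2)}(\tau)-r^{(2)}(\tau'))$ for all pairs of trajectories $\tau,\tau'$, while the optimal policies with respect to $r^{(1)}$ and $r^{(2)}$ differ (each is suboptimal for the other reward).
   Context: Episodic MDP with trajectories $\tau$; a comparison oracle with link function $\sigma$ and reward $r$ returns $\tau\succ\tau'$ with probability $\sigma(r(\tau)-r(\tau'))$. A policy is optimal for $r$ if it maximizes $\mathbb{E}_{\tau\sim\pi}[r(\tau)]$. *)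

From HB Require Import structures.
From mathcomp Require Import all_boot all_order all_algebra.
Set Implicit Arguments. Unset Strict Implicit. Unset Printing Implicit Defensive.
Import Order.TTheory GRing.Theory Num.Theory.
Local Open Scope ring_scope.

Definition is_dist (R : numDomainType) (T : finType) (p : T -> R) : Prop :=
  (forall t, 0 <= p t) /\ \sum_(t : T) p t = 1.

(* Episodic MDP with horizon H = 2: state space, action space,
   initial-state distribution and (known) transition kernel from step 1 to 2. *)
Record mdp2 (R : numDomainType) := MDP2 {
  st : finType;
  ac : finType;
  init : st -> R;
  trans : st -> ac -> st -> R }.

Definition valid_mdp (R : numDomainType) (M : mdp2 R) : Prop :=
  is_dist (@init R M) /\ forall s a, is_dist (@trans R M s a).

Definition traj (R : numDomainType) (M : mdp2 R) : finType :=
  (st M * ac M * st M * ac M)%type.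

(* general (randomized, history-dependent) policy for horizon 2 *)
Record policy2 (R : numDomainType) (M : mdp2 R) := Policy2 {
  pol1 : st M -> ac M -> R;
  pol2 : st M -> ac M -> st M -> ac M -> R }.

Definition valid_policy (R : numDomainType) (M : mdp2 R) (pi : policy2 M) : Prop :=
  (forall s, is_dist (pol1 pi s)) /\
  (forall s a s', is_dist (pol2 pi s a s')).

Definition traj_prob (R : numDomainType) (M : mdp2 R) (pi : policy2 M)
  (tau : traj M) : R :=
  let: (s1, a1, s2, a2) := tau in
  @init R M s1 * pol1 pi s1 a1 * @trans R M s1 a1 s2 * pol2 pi s1 a1 s2 a2.

Definition value (R : numDomainType) (M : mdp2 R) (r : traj M -> R)
  (pi : policy2 M) : R :=
  \sum_(tau : traj M) traj_prob pi tau * r tau.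

Definition optimal (R : numDomainType) (M : mdp2 R) (r : traj M -> R)
  (pi : policy2 M) : Prop :=
  valid_policy pi /\
  forall pi' : policy2 M, valid_policy pi' -> value r pi' <= value r pi.

Definition sigma_sign (R : numFieldType) (x : R) : R :=
  2^-1 * (1 + Num.sg x).

(* Under the sign link a comparison only reveals which of two trajectories
   has the larger reward, so any two rewards inducing the same ordering of
   trajectories are indistinguishable.  Consider an MDP whose first action
   either secures reward 1 or gambles on a fair coin that pays h or 0.  For
   every h > 1 the rewards are ordered 0 < 1 < h, yet gambling is optimal
   exactly when h / 2 > 1; the rewards with h = 3 and h = 3/2 are therefore
   indistinguishable but have disjoint sets of optimal policies. *)
From mathcomp Require Import all_boot all_order all_algebra.
From mathcomp Require Import ring lra.
Import Order.TTheory GRing.Theory Num.Theory.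
Local Open Scope ring_scope.

Lemma sgr_subr_eq {R : realDomainType} {x y u v : R} :
  (x < y) = (u < v) -> (y < x) = (v < u) -> Num.sg (x - y) = Num.sg (u - v).
Proof.
move=> lt_xy lt_yx; have [xy|yx|exy] := ltrgtP x y.
- by rewrite !ltr0_sg ?subr_lt0 -?lt_xy.
- by rewrite !gtr0_sg ?subr_gt0 -?lt_yx.
- move: lt_xy lt_yx; rewrite exy ltxx subrr sgr0 => /esym vu /esym uv.
  have /eqP -> : u == v by rewrite eq_le !leNgt vu uv.
  by rewrite subrr sgr0.
Qed.

Lemma sigma_sign_sub_eq (R : realFieldType) (T : Type) (r1 r2 : T -> R) :
  (forall t t', (r1 t < r1 t') = (r2 t < r2 t')) ->
  forall t t', sigma_sign (r1 t - r1 t') = sigma_sign (r2 t - r2 t').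
Proof. by move=> lt_r t t'; rewrite /sigma_sign (sgr_subr_eq (lt_r t t') (lt_r t' t)). Qed.

Lemma sum_pairE (R : nmodType) (A B : finType) (F : A * B -> R) :
  \sum_(p : A * B) F p = \sum_(a : A) \sum_(b : B) F (a, b).
Proof. by rewrite pair_bigA; apply: eq_bigr => -[]. Qed.

Section Gamble.
Variable R : realFieldType.

(* The episode starts in state [false]; action [true] (gamble) reaches state
   [true] (win) with probability 1/2, action [false] stays in [false]. *)
Definition gamble_mdp : mdp2 R :=
  @MDP2 R bool bool (fun s => if s then 0 else 1)
    (fun s a s' => if a then 2^-1 else if s' then 0 else 1).

Definition gamble_reward (h : R) (tau : traj gamble_mdp) : R :=
  let: (_, a1, s2, _) := tau in if a1 then (if s2 then h else 0) else 1.

Definition gamble_rank (tau : traj gamble_mdp) : nat :=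
  let: (_, a1, s2, _) := tau in if a1 then (if s2 then 2 else 0) else 1.

Definition gamble_prob (pi : policy2 gamble_mdp) : R := pol1 pi false true.

Lemma gamble_mdp_valid : valid_mdp gamble_mdp.
Proof.
split; first by split=> [[]|]; rewrite ?big_bool //=; lra.
by move=> s a; split=> [[]|]; case: a; rewrite ?big_bool //=; lra.
Qed.

Lemma ltr_gamble_reward (h : R) (tau tau' : traj gamble_mdp) : 1 < h ->
  (gamble_reward h tau < gamble_reward h tau') = (gamble_rank tau < gamble_rank tau')%N.
Proof.
move=> h_gt1; have h_gt0 : 0 < h by apply: lt_trans h_gt1.
move: tau tau' => [[[_ []] []] _] [[[_ []] []] _] /=;
  by rewrite ?ltxx ?ltr01 ?ltr10 ?h_gt0 ?h_gt1 ?(lt_gtF h_gt0) ?(lt_gtF h_gt1).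
Qed.

Lemma gamble_prob_bounds { pi : policy2 gamble_mdp } :
  valid_policy pi -> 0 <= gamble_prob pi <= 1.
Proof.
case=> /(_ false) [ge0 sum1] _; rewrite big_bool /= in sum1.
by have := ge0 true; have := ge0 false; rewrite /gamble_prob; lra.
Qed.

Lemma value_gamble_reward (h : R) (pi : policy2 gamble_mdp) : valid_policy pi ->
  value (gamble_reward h) pi = 1 - gamble_prob pi + gamble_prob pi * (h / 2).
Proof.
case=> /(_ false) [_ sum1] /(_ false) sum2.
have [_ safe] := sum2 false false; have [_ win] := sum2 true true.
rewrite !big_bool /= in sum1 safe win.
rewrite /value /traj /gamble_prob /= !sum_pairE !big_bool /=.
rewrite !(mulr0, mul0r, mulr1, mul1r, addr0, add0r).
rewrite -mulrDl -mulrDr win mulr1 -mulrDr safe mulr1.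
have -> : pol1 pi false false = 1 - pol1 pi false true by lra.
by field.
Qed.

Definition first_action_policy (b : bool) : policy2 gamble_mdp :=
  @Policy2 R gamble_mdp (fun _ a => if a == b then 1 else 0) (fun _ _ _ a => a%:R).

Lemma first_action_policy_valid (b : bool) : valid_policy (first_action_policy b).
Proof.
by split=> *; split=> [[]|]; rewrite ?big_bool /=; case: b => //=; lra.
Qed.

Lemma optimal_gamble_reward_gt2 (h : R) (pi : policy2 gamble_mdp) : 2 < h ->
  optimal (gamble_reward h) pi <-> valid_policy pi /\ gamble_prob pi = 1.
Proof.
move=> h_gt2; split=> [[pi_valid pi_max] | [pi_valid pi_gamble]].
  have := pi_max _ (first_action_policy_valid true).
  rewrite !value_gamble_reward //; last exact: first_action_policy_valid.
  by have := gamble_prob_bounds pi_valid; rewrite /gamble_prob /=; split=> //; nra.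
split=> // q q_valid; rewrite !value_gamble_reward // pi_gamble.
by have := gamble_prob_bounds q_valid; nra.
Qed.

Lemma optimal_gamble_reward_lt2 (h : R) (pi : policy2 gamble_mdp) : h < 2 ->
  optimal (gamble_reward h) pi <-> valid_policy pi /\ gamble_prob pi = 0.
Proof.
move=> h_lt2; split=> [[pi_valid pi_max] | [pi_valid pi_safe]].
  have := pi_max _ (first_action_policy_valid false).
  rewrite !value_gamble_reward //; last exact: first_action_policy_valid.
  by have := gamble_prob_bounds pi_valid; rewrite /gamble_prob /=; split=> //; nra.
split=> // q q_valid; rewrite !value_gamble_reward // pi_safe.
by have := gamble_prob_bounds q_valid; nra.
Qed.

End Gamble.

Theorem lemma2 (R : realFieldType) :
  exists (M : mdp2 R) (r1 r2 : traj M -> R),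
    valid_mdp M /\
    (forall tau tau' : traj M,
        sigma_sign (r1 tau - r1 tau') = sigma_sign (r2 tau - r2 tau')) /\
    (exists pi, optimal r1 pi) /\
    (exists pi, optimal r2 pi) /\
    (forall pi, optimal r1 pi -> ~ optimal r2 pi) /\
    (forall pi, optimal r2 pi -> ~ optimal r1 pi).
Proof.
have [three_gt1 three_gt2] : (1 : R) < 3 /\ (2 : R) < 3 by split; lra.
have [half3_gt1 half3_lt2] : (1 : R) < 3 / 2 /\ (3 / 2 : R) < 2 by split; lra.
have opt1 := @optimal_gamble_reward_gt2 R 3 ^~ three_gt2.
have opt2 := @optimal_gamble_reward_lt2 R (3 / 2) ^~ half3_lt2.
exists (gamble_mdp R), (gamble_reward R 3), (gamble_reward R (3 / 2)).
split; first exact: gamble_mdp_valid.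
split.
  apply: sigma_sign_sub_eq => tau tau'.
  by rewrite !ltr_gamble_reward.
split.
  exists (first_action_policy R true).
  by apply/opt1; split; first exact: first_action_policy_valid.
split.
  exists (first_action_policy R false).
  by apply/opt2; split; first exact: first_action_policy_valid.
have disjoint pi : optimal (gamble_reward R 3) pi -> ~ optimal (gamble_reward R (3 / 2)) pi.
  by move=> /opt1 [_ p1] /opt2 [_ p0]; have := oner_neq0 R; rewrite -p1 p0 eqxx.
by split=> pi ? ?; apply: (disjoint pi).
Qed.
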